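(* Let $G$ be a finite group and $p$ a prime dividing $|G|$. If the poset $\mathcal{A}_p(G)'/G$ has height $1$, then it is a contractible finite space.
   Context: $\mathcal{A}_p(G)$ is the poset of non-trivial elementary abelian $p$-subgroups of $G$, with $G$ acting by conjugation. $\mathcal{A}_p(G)'$ is the poset of non-empty chains of $\mathcal{A}_p(G)$ ordered by inclusion, with componentwise action; $\mathcal{A}_p(G)'/G$ is the orbit poset ($\overline{c}\le\overline{d}$ iff some representatives satisfy $c_1\subseteq d_1$), regarded as a finite $T_0$ space whose open sets are the down-sets. The height of a poset is the maximal length $n$ of a chain $x_0<x_1<\dots<x_n$. *)

From mathcomp Require Import all_boot all_fingroup all_solvable.
From Stdlib Require Reals.
Set Implicit Arguments. Unset Strict Implicit. Unset Printing Implicit Defensive.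

Section Defs.
Variable gT : finGroupType.
Local Open Scope group_scope.

Definition Ap (G : {set gT}) (p : nat) : {set {set gT}} :=
  [set A : {set gT} | [&& group_set A, A \subset G, p.-abelem A & A != 1]].

Definition Ap_chains (G : {set gT}) (p : nat) : {set {set {set gT}}} :=
  [set c : {set {set gT}} | [&& c \subset Ap G p, c != set0 &
     [forall A in c, forall B in c, (A \subset B) || (B \subset A)]]].

Definition chain_conj (c : {set {set gT}}) (x : gT) : {set {set gT}} :=
  [set A :^ x | A in c].

Definition chain_orbit (G : {set gT}) (c : {set {set gT}}) :
  {set {set {set gT}}} := [set chain_conj c x | x in G].

Definition Ap_orbits (G : {set gT}) (p : nat) : {set {set {set {set gT}}}} :=
  [set chain_orbit G c | c in Ap_chains G p].

Definition orbit_le (o1 o2 : {set {set {set gT}}}) : bool :=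
  [exists c in o1, exists d in o2, c \subset d].

End Defs.

Section FinSpace.
Variable T : finType.
Variables (D : {set T}) (le : rel T).

Definition lt_of (x y : T) : bool := le x y && (x != y).

Definition poset_height (n : nat) : Prop :=
  (exists s : seq T, size s = n.+1 /\ all (mem D) s /\ sorted lt_of s) /\
  (forall s : seq T, all (mem D) s -> sorted lt_of s -> size s <= n.+1).

(* open sets of the associated finite T0 space: the down-sets *)
Definition fs_open (U : {set T}) : Prop :=
  U \subset D /\ forall x y, x \in U -> y \in D -> le y x -> y \in U.

(* H : D x [0,1] -> D is continuous for the product topology; since the
   down-set {y | le y x} is the minimal open neighbourhood of x, this is the
   literal meaning of "preimages of open sets are open". *)
Definition fs_homotopy_continuous (H : T -> Reals.Rdefinitions.R -> T) : Prop :=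
  forall V : {set T}, fs_open V ->
  forall x t, x \in D -> (Reals.Rdefinitions.Rle Reals.Rdefinitions.R0 t /\ Reals.Rdefinitions.Rle t Reals.Rdefinitions.R1) ->
    H x t \in V ->
    exists eps : Reals.Rdefinitions.R, Reals.Rdefinitions.Rlt Reals.Rdefinitions.R0 eps /\
      forall y s, y \in D -> le y x ->
        (Reals.Rdefinitions.Rle Reals.Rdefinitions.R0 s /\ Reals.Rdefinitions.Rle s Reals.Rdefinitions.R1) ->
        Reals.Rdefinitions.Rlt (Reals.Rbasic_fun.Rabs (Reals.Rdefinitions.Rminus s t)) eps ->
        H y s \in V.

Definition fs_contractible : Prop :=
  exists (x0 : T) (H : T -> Reals.Rdefinitions.R -> T),
    x0 \in D /\
    (forall x t, x \in D -> (Reals.Rdefinitions.Rle Reals.Rdefinitions.R0 t /\ Reals.Rdefinitions.Rle t Reals.Rdefinitions.R1) ->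
       H x t \in D) /\
    (forall x, x \in D -> H x Reals.Rdefinitions.R0 = x) /\
    (forall x, x \in D -> H x Reals.Rdefinitions.R1 = x0) /\
    fs_homotopy_continuous H.

End FinSpace.

(* A_p(G) contains no chain A < B < C: otherwise [A] < [A < B] < [A < B < C]
   would be a chain of length 2 in A_p(G)'/G.  Hence A_p(G)'/G is the poset of
   vertices and edges of a graph whose vertices are the conjugacy classes of
   A_p(G) and whose edges are the classes of pairs A < B, A minimal and B not.
   Let Z = Omega_1(Z(S)) for a Sylow p-subgroup S.  If Z is not minimal, every
   non-minimal element is conjugate to Z and each minimal A lies in a unique
   non-minimal element up to N_G(A): the graph is a star.  If Z is minimal, every
   non-minimal B contains a conjugate of Z, unique up to N_G(B), and every other
   minimal A again has a unique non-minimal overgroup up to N_G(A): the graph is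
   a tree of depth 2 rooted at the class of Z.
   In the face poset of a rooted tree, sending each point to its ancestor of
   depth at most n gives order-preserving maps, consecutive ones pointwise
   comparable; comparable maps of finite spaces are homotopic, so these maps
   contract the space onto the root. *)

From mathcomp Require Import all_boot all_fingroup all_solvable zify.
From Stdlib Require Import Reals Lra.
Set Implicit Arguments. Unset Strict Implicit. Unset Printing Implicit Defensive.

Section FiniteSpaceHomotopy.
Variables (T : finType) (D : {set T}) (le : rel T).
Local Open Scope R_scope.

Definition fs_homotopic (f g : T -> T) : Prop :=
  exists H : T -> R -> T,
    [/\ forall x t, x \in D -> 0 <= t <= 1 -> H x t \in D,
        forall x, x \in D -> H x 0 = f x,
        forall x, x \in D -> H x 1 = g x &
        fs_homotopy_continuous D le H].

Lemma fs_homotopic_sym f g : fs_homotopic f g -> fs_homotopic g f.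
Proof.
case=> H [HD H0 H1 Hcont]; exists (fun x t => H x (1 - t)); split.
- by move=> x t xD t01; apply: HD => //; lra.
- by move=> x xD; rewrite Rminus_0_r H1.
- by move=> x xD; rewrite Rminus_diag H0.
move=> V Vopen x t xD t01 HV.
have [|eps [eps_gt0 Heps]] := Hcont V Vopen x (1 - t) xD _ HV; first lra.
exists eps; split=> // y s yD yx s01 /Rabs_def2 [st ts].
by apply: Heps => //; [lra | apply: Rabs_def1; lra].
Qed.

Lemma fs_homotopic_trans f g h :
  fs_homotopic f g -> fs_homotopic g h -> fs_homotopic f h.
Proof.
case=> H1 [H1D H10 H11 H1cont] [H2 [H2D H20 H21 H2cont]].
exists (fun x t => if Rlt_dec t (1/2) then H1 x (2 * t) else H2 x (2 * t - 1)).
split.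
- move=> x t xD t01; case: (Rlt_dec _ _) => ht; [apply: H1D | apply: H2D] => //; lra.
- by move=> x xD; case: (Rlt_dec _ _) => [hs|hs]; [rewrite Rmult_0_r H10 | lra].
- move=> x xD; case: (Rlt_dec _ _) => [hs|hs]; first lra.
  by rewrite Rmult_1_r (_ : 2 - 1 = 1) ?H21 //; lra.
move=> V Vopen x t xD t01; case: (Rlt_dec t (1/2)) => [t_lt|t_ge] /= HV.
  have [|e [e_gt0 He]] := H1cont V Vopen x (2 * t) xD _ HV; first lra.
  exists (Rmin (e / 2) (1/2 - t)); split; first by apply: Rmin_glb_lt; lra.
  move=> y s yD yx s01 /Rabs_def2 [st ts].
  have := Rmin_l (e / 2) (1/2 - t); have := Rmin_r (e / 2) (1/2 - t) => m2 m1.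
  case: (Rlt_dec _ _) => [hs|hs]; last lra.
  by apply: He => //; [lra | apply: Rabs_def1; lra].
have [|e2 [e2_gt0 He2]] := H2cont V Vopen x (2 * t - 1) xD _ HV; first lra.
have [t_gt|t_half] := Rle_lt_or_eq_dec (1/2) t (Rnot_lt_le _ _ t_ge).
  exists (Rmin (e2 / 2) (t - 1/2)); split; first by apply: Rmin_glb_lt; lra.
  move=> y s yD yx s01 /Rabs_def2 [st ts].
  have := Rmin_l (e2 / 2) (t - 1/2); have := Rmin_r (e2 / 2) (t - 1/2) => m2 m1.
  case: (Rlt_dec _ _) => [hs|hs]; first lra.
  by apply: He2 => //; [lra | apply: Rabs_def1; lra].
have HV1 : H1 x 1 \in V by rewrite H11 // -H20 // (_ : 0 = 2 * t - 1) //; lra.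
have [|e1 [e1_gt0 He1]] := H1cont V Vopen x 1 xD _ HV1; first lra.
exists (Rmin (e1 / 2) (e2 / 2)); split; first by apply: Rmin_glb_lt; lra.
move=> y s yD yx s01 /Rabs_def2 [st ts].
have := Rmin_l (e1 / 2) (e2 / 2); have := Rmin_r (e1 / 2) (e2 / 2) => m2 m1.
case: (Rlt_dec _ _) => hs.
  by apply: He1 => //; [lra | apply: Rabs_def1; lra].
by apply: He2 => //; [lra | apply: Rabs_def1; lra].
Qed.

Lemma fs_homotopic_le f g :
  {in D, forall x, f x \in D} -> {in D, forall x, g x \in D} ->
  {in D &, forall x y, le x y -> le (f x) (f y)} ->
  {in D &, forall x y, le x y -> le (g x) (g y)} ->
  {in D, forall x, le (f x) (g x)} -> fs_homotopic f g.
Proof.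
move=> fD gD f_mono g_mono fg.
exists (fun x t => if Rlt_dec t 1 then f x else g x); split.
- by move=> x t xD _; case: (Rlt_dec _ _) => ht; [apply: fD | apply: gD].
- by move=> x xD; case: (Rlt_dec _ _) => ht //=; lra.
- by move=> x xD; case: (Rlt_dec _ _) => ht //=; lra.
(* The value at [t = 1] dominates all nearby values, and open sets are down-sets. *)
move=> V [_ Vdown] x t xD t01 HV.
have fxV : f x \in V.
  case: (Rlt_dec _ _) HV => ht HV //.
  exact: Vdown HV (fD x xD) (fg x xD).
exists (if Rlt_dec t 1 then 1 - t else 1); split.
  by case: (Rlt_dec _ _) => ht /=; lra.
move=> y s yD yx s01 /Rabs_def2 [st ts].
case: (Rlt_dec s 1) => hs.
  exact: Vdown fxV (fD y yD) (f_mono y x yD xD yx).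
case: (Rlt_dec t 1) HV st => ht /= HV st; first lra.
exact: Vdown HV (gD y yD) (g_mono y x yD xD yx).
Qed.

Lemma fs_homotopic_eq_on f f' g :
  {in D, f =1 f'} -> fs_homotopic f g -> fs_homotopic f' g.
Proof.
move=> ff' [H [HD H0 H1 Hcont]]; exists H; split=> // x xD.
by rewrite H0 ?ff'.
Qed.

Lemma fs_contractible_homotopic x0 :
  x0 \in D -> fs_homotopic idfun (fun=> x0) -> fs_contractible D le.
Proof. by move=> x0D [H [HD H0 H1 Hcont]]; exists x0, H. Qed.

End FiniteSpaceHomotopy.

Section RootedTree.
Variables (T : finType) (D : {set T}) (le : rel T) (r : T) (depth : T -> nat).

Definition is_parent x y :=
  (depth y == (depth x).-1) && (if odd (depth x) then le y x else le x y).

Lemma is_parent_even x y k :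
  depth x = k.+1.*2 -> depth y = k.*2.+1 -> le x y -> is_parent x y.
Proof. by rewrite /is_parent => -> ->; rewrite doubleS /= odd_double eqxx. Qed.

Lemma is_parent_odd x y k :
  depth x = k.*2.+1 -> depth y = k.*2 -> le y x -> is_parent x y.
Proof. by rewrite /is_parent => -> ->; rewrite /= odd_double eqxx. Qed.

Hypotheses (rD : r \in D) (le_refl : {in D, forall x, le x x}).
Hypothesis depth0 : {in D, forall x, depth x = 0 -> x = r}.
Hypothesis parent_exists :
  {in D, forall x, 0 < depth x -> exists2 y, y \in D & is_parent x y}.
Hypothesis parent_unique : forall x y z, x \in D -> y \in D -> z \in D ->
  0 < depth x -> is_parent x y -> is_parent x z -> y = z.
Hypothesis le_parent : {in D &, forall x y, le x y -> x != y ->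
  is_parent x y \/ is_parent y x}.

Definition parent x := odflt r [pick y in D | is_parent x y].

Lemma parentD x : parent x \in D.
Proof. by rewrite /parent; case: pickP => [y /andP []|]. Qed.

Lemma is_parent_parent x : x \in D -> 0 < depth x -> is_parent x (parent x).
Proof.
move=> xD /(parent_exists xD) [y yD xy]; rewrite /parent.
by case: pickP => [z /andP [] //|/(_ y)]; rewrite yD xy.
Qed.

Lemma depth_parent x : x \in D -> 0 < depth x -> depth (parent x) = (depth x).-1.
Proof. by move=> xD /(is_parent_parent xD) /andP [/eqP]. Qed.

Lemma le_parent_eq x y : x \in D -> y \in D -> le x y -> x != y ->
  (0 < depth x /\ y = parent x) \/ (0 < depth y /\ x = parent y).
Proof.
have pos z z' : z \in D -> z' \in D -> z != z' -> is_parent z z' -> 0 < depth z.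
  move=> zD z'D + /andP [/eqP dz' _]; rewrite lt0n; apply: contraNneq => dz.
  by rewrite (depth0 zD dz) (depth0 z'D) // dz' dz.
move=> xD yD xy nxy; case: (le_parent xD yD xy nxy) => [xy'|yx'].
  have dx := pos _ _ xD yD nxy xy'; left; split=> //.
  exact: parent_unique xD yD (parentD x) dx xy' (is_parent_parent xD dx).
have nyx : y != x by rewrite eq_sym.
have dy := pos _ _ yD xD nyx yx'; right; split=> //.
exact: parent_unique yD xD (parentD y) dy yx' (is_parent_parent yD dy).
Qed.

Definition ancestor n x := iter (depth x - n) parent x.

Lemma iter_parent k x : x \in D -> k <= depth x ->
  iter k parent x \in D /\ depth (iter k parent x) = depth x - k.
Proof.
move=> xD; elim: k => [|k IHk] lt_k /=; first by rewrite subn0.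
have [kD dk] := IHk (ltnW lt_k); split; first exact: parentD.
by rewrite depth_parent // dk ?subn_gt0 // subnS.
Qed.

Lemma ancestorD n x : x \in D -> ancestor n x \in D.
Proof. by move=> xD; have [] := iter_parent xD (leq_subr n (depth x)). Qed.

Lemma depth_ancestor n x : x \in D -> depth (ancestor n x) = minn n (depth x).
Proof.
by move=> xD; have [_ ->] := iter_parent xD (leq_subr n (depth x)); rewrite -minnE minnC.
Qed.

Lemma ancestor_id n x : depth x <= n -> ancestor n x = x.
Proof. by rewrite /ancestor -subn_eq0 => /eqP ->. Qed.

Lemma ancestor_parent n x : x \in D -> n < depth x -> ancestor n (parent x) = ancestor n x.
Proof.
move=> xD lt_n; have dx : 0 < depth x := leq_ltn_trans (leq0n n) lt_n.
rewrite /ancestor depth_parent // [in RHS](_ : depth x - n = ((depth x).-1 - n).+1) ?iterSr //.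
by case: (depth x) lt_n => // d; rewrite ltnS => le_nd; rewrite subSn.
Qed.

Lemma ancestor_parent_cases n z : z \in D -> 0 < depth z ->
  ancestor n (parent z) = ancestor n z \/
  ancestor n z = z /\ ancestor n (parent z) = parent z.
Proof.
move=> zD dz; case: (leqP (depth z) n) => [le_zn|lt_nz]; last by left; apply: ancestor_parent.
right; rewrite !ancestor_id // depth_parent //; exact: leq_trans (leq_pred _) le_zn.
Qed.

Lemma ancestor_mono n : {in D &, forall x y, le x y -> le (ancestor n x) (ancestor n y)}.
Proof.
move=> x y xD yD xy; have [<-|nxy] := eqVneq x y; first exact/le_refl/ancestorD.
have ancD := ancestorD n.
case: (le_parent_eq xD yD xy nxy) => [[dx ey]|[dy ex]].
  by rewrite ey in xy *; case: (ancestor_parent_cases n xD dx) => [->|[-> ->]]; auto.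
by rewrite ex in xy *; case: (ancestor_parent_cases n yD dy) => [->|[-> ->]]; auto.
Qed.

Lemma ancestor_step n x : x \in D ->
  ancestor n x = ancestor n.+1 x \/
  depth (ancestor n.+1 x) = n.+1 /\ is_parent (ancestor n.+1 x) (ancestor n x).
Proof.
move=> xD; case: (leqP (depth x) n) => [le_xn|lt_nx].
  by left; rewrite !ancestor_id // (leq_trans le_xn).
have dn : depth (ancestor n.+1 x) = n.+1 by rewrite depth_ancestor //; apply/minn_idPl.
right; split=> //.
have -> : ancestor n x = parent (ancestor n.+1 x).
  by rewrite /ancestor -iterS subnSK.
by apply: is_parent_parent; rewrite ?ancestorD ?dn.
Qed.

Lemma ancestor_le_succ n x : x \in D ->
  if odd n.+1 then le (ancestor n x) (ancestor n.+1 x)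
  else le (ancestor n.+1 x) (ancestor n x).
Proof.
move=> xD; case: (ancestor_step n xD) => [->|[dn /andP [_]]].
  by case: ifP => _; apply/le_refl/ancestorD.
by rewrite dn.
Qed.

Lemma homotopic_ancestor_succ n :
  fs_homotopic D le (ancestor n.+1) (ancestor n).
Proof.
have ancD m : {in D, forall x, ancestor m x \in D} by move=> x; apply: ancestorD.
case: (odd n.+1) (@ancestor_le_succ n) => le_n.
  by apply/fs_homotopic_sym/fs_homotopic_le => //; apply: ancestor_mono.
by apply: fs_homotopic_le => //; apply: ancestor_mono.
Qed.

Lemma homotopic_ancestor_root n : fs_homotopic D le (ancestor n) (fun=> r).
Proof.
elim: n => [|n IHn]; last exact: fs_homotopic_trans (homotopic_ancestor_succ n) IHn.
have anc0 x : x \in D -> ancestor 0 x = r.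
  by move=> xD; apply: depth0; rewrite ?ancestorD ?depth_ancestor ?min0n.
apply: fs_homotopic_le => [x xD|x xD|x y xD yD _|x y _ _ _|x xD] /=.
- exact: ancestorD.
- exact: rD.
- by rewrite !anc0 //; apply: le_refl.
- exact: le_refl.
- by rewrite anc0 //; apply: le_refl.
Qed.

Lemma rooted_tree_contractible : fs_contractible D le.
Proof.
apply: (fs_contractible_homotopic rD).
apply: fs_homotopic_eq_on (homotopic_ancestor_root (\max_(x in D) depth x)).
by move=> x xD; apply: ancestor_id; apply: leq_bigmax_cond.
Qed.

End RootedTree.

Section ElementaryAbelianSubgroups.
Variables (gT : finGroupType) (G : {group gT}) (p : nat).
Local Open Scope group_scope.
Implicit Types (A B C X : {set gT}) (H K P S T : {group gT}).

Definition Ap_min A := minset (fun B => B \in Ap G p) A.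
Definition Ap_nonmin A := (A \in Ap G p) && ~~ Ap_min A.
(* When Omega_1(Z(S)) is minimal, these form the root class of the tree. *)
Definition Sylow_root A :=
  [exists S : {group gT}, p.-Sylow(G) S && (A == 'Ohm_1('Z(S)))].

Lemma ApE H : (gval H \in Ap G p) = [&& H \subset G, p.-abelem H & H :!=: 1].
Proof. by rewrite inE groupP. Qed.

Lemma Ap_group A : A \in Ap G p -> exists H : {group gT}, A = H.
Proof. by rewrite inE => /andP [gA _]; exists (Group gA). Qed.

Lemma ApJ A x : x \in G -> (A :^ x \in Ap G p) = (A \in Ap G p).
Proof.
have ApJ1 B y : y \in G -> B \in Ap G p -> B :^ y \in Ap G p.
  move=> yG; rewrite !inE => /and4P [gB BG aB nB].
  have -> : B = Group gB by [].
  by rewrite groupP abelemJ aB conjsg_eq1 nB -(conjGid yG) conjSg BG.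
move=> xG; apply/idP/idP; last exact: ApJ1.
by move/(ApJ1 _ _ (groupVr xG)); rewrite conjsgK.
Qed.

Lemma Ap_minP A : reflect (A \in Ap G p /\ forall B, B \in Ap G p -> B \subset A -> B = A)
  (Ap_min A).
Proof. exact: minsetP. Qed.

Lemma Ap_min_Ap A : Ap_min A -> A \in Ap G p.
Proof. by case/Ap_minP. Qed.

Lemma Ap_nonmin_Ap A : Ap_nonmin A -> A \in Ap G p.
Proof. by case/andP. Qed.

Lemma Ap_min_nonmin A : Ap_min A -> ~~ Ap_nonmin A.
Proof. by rewrite /Ap_nonmin => ->; rewrite andbF. Qed.

Lemma Ap_minJ A x : x \in G -> Ap_min (A :^ x) = Ap_min A.
Proof.
have minJ B y : y \in G -> Ap_min B -> Ap_min (B :^ y).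
  move=> yG /Ap_minP [BAp minB]; apply/Ap_minP; rewrite ApJ //; split=> // C CAp CBy.
  have <- : C :^ y^-1 = B by apply: minB; rewrite ?ApJ ?groupV ?sub_conjgV.
  by rewrite conjsgKV.
move=> xG; apply/idP/idP; last exact: minJ.
by move/(minJ _ _ (groupVr xG)); rewrite conjsgK.
Qed.

Lemma Ap_nonminJ A x : x \in G -> Ap_nonmin (A :^ x) = Ap_nonmin A.
Proof. by move=> xG; rewrite /Ap_nonmin ApJ ?Ap_minJ. Qed.

Lemma Ap_nonmin_proper A B :
  A \in Ap G p -> B \in Ap G p -> A \proper B -> Ap_nonmin B.
Proof.
move=> AAp BAp AB; rewrite /Ap_nonmin BAp; apply/negP => /Ap_minP [_ minB].
by have eAB := minB A AAp (proper_sub AB); rewrite eAB properxx in AB.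
Qed.

Lemma Ap_join H K : gval H \in Ap G p -> gval K \in Ap G p -> K \subset 'C(H) ->
  H <*> K \in Ap G p.
Proof.
rewrite !ApE => /and3P [HG aH nH] /and3P [KG aK _] cHK.
rewrite /= join_subG HG KG (cprod_abelem p (cprodEY cHK)) aH aK /=.
by apply: contra nH => /eqP HK1; rewrite -subG1 -HK1 joing_subl.
Qed.

Lemma centerJ A x : 'Z(A :^ x) = 'Z(A) :^ x.
Proof. by rewrite /center centJ conjIg. Qed.

Lemma Ohm1_centerJ S x : 'Ohm_1('Z(S :^ x)) = 'Ohm_1('Z(S)) :^ x.
Proof. by rewrite centerJ -OhmJ. Qed.

Lemma Ap_nonminP B : Ap_nonmin B -> exists2 A, A \in Ap G p & A \proper B.
Proof.
case/andP => BAp nminB; have [A minA AB] := minset_exists BAp.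
exists A; first exact: Ap_min_Ap.
by rewrite properEneq AB andbT; apply: contraNneq nminB => <-.
Qed.

Lemma Ap_min_adjacent A B : Ap_min A -> B \in Ap G p ->
  (A \proper B) || (B \proper A) -> A \proper B.
Proof.
move=> minA BAp /orP [//|BA].
by have := Ap_nonmin_proper BAp (Ap_min_Ap minA) BA; rewrite /Ap_nonmin minA andbF.
Qed.

Lemma Ohm1_center_cent A S : A \subset S -> 'Ohm_1('Z(S)) \subset 'C(A).
Proof.
move=> AS; apply: subset_trans (Ohm_sub 1 _) _.
by apply: subset_trans (subsetIr S _) _; apply: centS.
Qed.

Lemma Sylow_cent_Ohm1_center S : S \subset 'C('Ohm_1('Z(S))).
Proof. by rewrite centsC; apply: Ohm1_center_cent. Qed.

Lemma Sylow_norm_sub_eq (M : {group gT}) P T :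
  p.-Sylow(M) P -> p.-group T -> P \subset T -> 'N_T(P) \subset M -> T :=: P.
Proof.
move=> sylP pT PT NM; have NP : 'N_T(P) :=: P.
  by apply: (sub_pHall sylP) => //; [exact: pgroupS (subsetIl _ _) pT | rewrite subsetI PT normG].
by apply: nilpotent_sub_norm (pgroup_nil pT) PT _; rewrite NP.
Qed.

Hypotheses (p_pr : prime p) (p_dvd_G : p %| #|G|).

Lemma Ohm1_center_Ap S : p.-Sylow(G) S -> 'Ohm_1('Z(S)) \in Ap G p.
Proof.
move=> sylS; have pS := pHall_pgroup sylS.
have S1 : S :!=: 1.
  apply: contraTneq p_dvd_G => S1; have /esym/eqP := card_Hall sylS.
  by rewrite S1 cards1 p_part_eq1 mem_primes p_pr cardG_gt0.
rewrite ApE (subset_trans (Ohm_sub 1 _)) ?(subset_trans (center_sub S)) ?(pHall_sub sylS) //=.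
rewrite Ohm1_abelem ?(pgroupS (center_sub S)) ?center_abelian //=.
by rewrite Ohm1_eq1 (center_nil_eq1 (pgroup_nil pS)).
Qed.

Lemma sub_Ohm1_center A S : A \in Ap G p -> A \subset 'Z(S) -> A \subset 'Ohm_1('Z(S)).
Proof.
move=> AAp sAZ; have [H eA] := Ap_group AAp.
move: AAp; rewrite eA ApE => /and3P [_ aH _].
by rewrite -(Ohm1_id aH); apply: OhmS; rewrite -eA.
Qed.

Lemma Sylow_rootJ A x : x \in G -> Sylow_root (A :^ x) = Sylow_root A.
Proof.
have rootJ B y : y \in G -> Sylow_root B -> Sylow_root (B :^ y).
  move=> yG /existsP [S /andP [sylS /eqP ->]]; apply/existsP; exists (S :^ y)%G.
  by rewrite pHallJ // sylS /= Ohm1_centerJ eqxx.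
move=> xG; apply/idP/idP; last exact: rootJ.
by move/(rootJ _ _ (groupVr xG)); rewrite conjsgK.
Qed.

Lemma Sylow_root_conj A S0 : p.-Sylow(G) S0 -> Sylow_root A ->
  exists2 x, x \in G & A = 'Ohm_1('Z(S0)) :^ x.
Proof.
move=> sylS0 /existsP [S /andP [sylS /eqP ->]].
have [x xG ->] := Sylow_trans sylS0 sylS.
by exists x; rewrite // Ohm1_centerJ.
Qed.

Lemma Sylow_root_Ap A : Sylow_root A -> A \in Ap G p.
Proof. by case/existsP => S /andP [sylS /eqP ->]; apply: Ohm1_center_Ap. Qed.

End ElementaryAbelianSubgroups.

Section ChainOrbits.
Variables (gT : finGroupType) (G : {group gT}) (p : nat).
Local Open Scope group_scope.
Implicit Types (A B C : {set gT}) (c d : {set {set gT}}).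

Local Notation orbit := (chain_orbit G).
Local Notation chains := (Ap_chains G p).

Lemma chain_conj1 c : chain_conj c 1 = c.
Proof. by rewrite /chain_conj (eq_imset _ (@conjsg1 gT)) imset_id. Qed.

Lemma chain_conjM c x y : chain_conj (chain_conj c x) y = chain_conj c (x * y).
Proof. by rewrite /chain_conj -imset_comp; apply: eq_imset => A /=; rewrite conjsgM. Qed.

Lemma chain_conj_set1 A x : chain_conj [set A] x = [set A :^ x].
Proof. exact: imset_set1. Qed.

Lemma chain_conj_set2 A B x : chain_conj [set A; B] x = [set A :^ x; B :^ x].
Proof. by rewrite /chain_conj imsetU1 imset_set1. Qed.

Lemma card_chain_conj c x : #|chain_conj c x| = #|c|.
Proof. by rewrite card_imset //; apply: conjsg_inj. Qed.

Lemma chain_orbit_id c : c \in orbit c.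
Proof. by apply/imsetP; exists 1; rewrite ?chain_conj1. Qed.

Lemma chain_orbitJ c x : x \in G -> orbit (chain_conj c x) = orbit c.
Proof.
move=> xG; apply/setP => d; apply/imsetP/imsetP => [] [y yG ->].
  by exists (x * y); rewrite ?groupM ?chain_conjM.
by exists (x^-1 * y); rewrite ?groupM ?groupV // chain_conjM mulKVg.
Qed.

Lemma chain_orbit_set1J A x : x \in G -> orbit [set A :^ x] = orbit [set A].
Proof. by move=> xG; rewrite -chain_conj_set1 chain_orbitJ. Qed.

Lemma chain_orbit_set2J A B x : x \in G -> orbit [set A :^ x; B :^ x] = orbit [set A; B].
Proof. by move=> xG; rewrite -chain_conj_set2 chain_orbitJ. Qed.

Lemma mem_chain_orbit c d : d \in orbit c -> exists2 x, x \in G & d = chain_conj c x.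
Proof. by case/imsetP => x; exists x. Qed.

Lemma orbit_leP c d :
  reflect (exists2 x, x \in G & chain_conj c x \subset d) (orbit_le (orbit c) (orbit d)).
Proof.
apply: (iffP existsP) => [[_ /andP [/imsetP [x xG ->] /existsP [_ /andP [/imsetP [y yG ->]]]]]|].
  move=> /(imsetS (conjugate^~ y^-1)); rewrite -/(chain_conj _ _) -/(chain_conj _ _).
  by rewrite !chain_conjM mulgV chain_conj1 => sub; exists (x * y^-1); rewrite ?groupM ?groupV.
case=> x xG sub; exists (chain_conj c x); rewrite imset_f //=.
by apply/existsP; exists d; rewrite chain_orbit_id.
Qed.

Lemma orbit_le_sub c d : c \subset d -> orbit_le (orbit c) (orbit d).
Proof. by move=> cd; apply/orbit_leP; exists 1; rewrite ?chain_conj1. Qed.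

Lemma set1_chain A : A \in Ap G p -> [set A] \in chains.
Proof.
move=> AAp; rewrite inE sub1set AAp -card_gt0 cards1 /=.
by apply/forall_inP => X /set1P ->; apply/forall_inP => Y /set1P ->; rewrite subxx.
Qed.

Lemma set2_chain A B : A \in Ap G p -> B \in Ap G p ->
  (A \proper B) || (B \proper A) -> [set A; B] \in chains.
Proof.
move=> AAp BAp AB; rewrite inE; apply/and3P; split.
- by apply/subsetP => X /set2P [->|->].
- by apply/set0Pn; exists A; rewrite set21.
apply/forall_inP => X /set2P [->|->]; apply/forall_inP => Y /set2P [->|->];
  by rewrite ?subxx //; case/orP: AB => /proper_sub ->; rewrite ?orbT.
Qed.

Lemma orbit_le_refl o : o \in Ap_orbits G p -> orbit_le o o.
Proof. by case/imsetP => c _ ->; apply: orbit_le_sub. Qed.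

Lemma chain_orbit_card c d : orbit c = orbit d -> #|c| = #|d|.
Proof.
move=> ecd; have /mem_chain_orbit [x _ ->] : d \in orbit c by rewrite ecd chain_orbit_id.
by rewrite card_chain_conj.
Qed.

Lemma height1_no_proper_chain3 : poset_height (Ap_orbits G p) (@orbit_le gT) 1 ->
  forall A B C, A \in Ap G p -> B \in Ap G p -> C \in Ap G p ->
  A \proper B -> B \proper C -> False.
Proof.
move=> [_ height_le] A B C AAp BAp CAp AB BC.
have AC := proper_trans AB BC.
have c3 : (A |: [set B; C]) \in chains.
  rewrite inE; apply/and3P; split.
  - by apply/subsetP => X /setU1P [->|/set2P [->|->]].
  - by apply/set0Pn; exists A; rewrite setU11.
  apply/forall_inP => X /setU1P [->|/set2P [->|->]];
  apply/forall_inP => Y /setU1P [->|/set2P [->|->]];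
  by rewrite ?subxx ?(proper_sub AB) ?(proper_sub BC) ?(proper_sub AC) ?orbT.
have card3 : #|(A |: [set B; C])| = 3.
  by rewrite cardsU1 cards2 !inE negb_or (proper_neq AB) (proper_neq AC) (proper_neq BC).
have card2 : #|[set A; B]| = 2 by rewrite cards2 (proper_neq AB).
have orbit_lt (c d : {set {set gT}}) : #|c| != #|d| -> c \subset d ->
    lt_of (@orbit_le gT) (orbit c) (orbit d).
  by move=> ncd cd; rewrite /lt_of orbit_le_sub //=; apply: contra ncd => /eqP/chain_orbit_card ->.
have := height_le [:: orbit [set A]; orbit [set A; B]; orbit (A |: [set B; C])].
rewrite /= !imset_f ?set1_chain ?set2_chain ?AB //=.
rewrite !orbit_lt ?cards1 ?card2 ?card3 ?sub1set ?set21 //; first by move/(_ isT isT).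
by apply/subsetP => X /set2P [->|->]; rewrite !inE eqxx ?orbT.
Qed.

End ChainOrbits.

Section HeightOneOrbits.
Variables (gT : finGroupType) (G : {group gT}) (p : nat).
Local Open Scope group_scope.
Implicit Types (A B C : {set gT}) (c d : {set {set gT}}).

Local Notation orbit := (chain_orbit G).
Local Notation chains := (Ap_chains G p).
Local Notation orbits := (Ap_orbits G p).

Hypothesis no_proper_chain3 : forall A B C,
  A \in Ap G p -> B \in Ap G p -> C \in Ap G p -> A \proper B -> B \proper C -> False.

Lemma chain_shape c : c \in chains ->
  (exists2 A, A \in Ap G p & c = [set A]) \/
  (exists A B, [/\ A \in Ap G p, B \in Ap G p, A \proper B & c = [set A; B]]).
Proof.
rewrite inE => /and3P [/subsetP cAp /set0Pn [A Ac] /forall_inP tot].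
have cmp X Y : X \in c -> Y \in c -> X != Y -> (X \proper Y) || (Y \proper X).
  move=> Xc Yc nXY; rewrite !properEneq [Y == X]eq_sym nXY.
  by have /forall_inP/(_ Y Yc) := tot X Xc.
have [sub_cA|/subsetPn [B Bc]] := boolP (c \subset [set A]).
  by left; exists A; rewrite ?cAp //; apply/eqP; rewrite eqEsubset sub_cA sub1set Ac.
rewrite in_set1 => nBA; right.
wlog AB : A B Ac Bc nBA / A \proper B.
  move=> wlog_AB; have nAB : A != B by rewrite eq_sym.
  by case/orP: (cmp A B Ac Bc nAB) => [AB|BA]; [apply: (wlog_AB A B) | apply: (wlog_AB B A)].
exists A, B; split; rewrite ?cAp //; apply/eqP; rewrite eqEsubset.
rewrite andbC; apply/andP; split; first by apply/subsetP => X /set2P [->|->].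
apply/subsetP => X Xc; rewrite !inE; apply/negPn/negP; rewrite negb_or => /andP [nXA nXB].
have no3 Y Z W : Y \in c -> Z \in c -> W \in c -> Y \proper Z -> Z \proper W -> False.
  by move=> /cAp + /cAp + /cAp; apply: no_proper_chain3.
case/orP: (cmp X A Xc Ac nXA) => [XA|AX]; first exact: no3 Xc Ac Bc XA AB.
case/orP: (cmp X B Xc Bc nXB) => [XB|BX]; first exact: no3 Ac Xc Bc AX XB.
exact: no3 Ac Bc Xc AB BX.
Qed.

Lemma orbitsP o : o \in orbits -> exists2 c, c \in chains & o = orbit c.
Proof. by case/imsetP => c; exists c. Qed.

Lemma orbit_set1_le_cases A o : o \in orbits -> orbit_le (orbit [set A]) o ->
  o = orbit [set A] \/
  exists B, [/\ B \in Ap G p, (A \proper B) || (B \proper A) & o = orbit [set A; B]].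
Proof.
case/orbitsP => d /chain_shape [[E _ ->]|[E [F [EAp FAp EF ->]]]] ->.
  case/orbit_leP => x xG; rewrite chain_conj_set1 sub1set => /set1P <-.
  by left; rewrite chain_orbit_set1J.
case/orbit_leP => x xG; rewrite chain_conj_set1 sub1set => /set2P [eE|eF]; right.
  exists (F :^ x^-1); split; first by rewrite ApJ ?groupV.
    by rewrite -(properJ _ _ x) conjsgKV eE EF.
  by rewrite -(chain_orbit_set2J A _ xG) conjsgKV eE.
exists (E :^ x^-1); split; first by rewrite ApJ ?groupV.
  by rewrite -[E :^ x^-1 \proper A](properJ _ _ x) conjsgKV eF EF orbT.
by rewrite [in RHS]setUC -(chain_orbit_set2J (E :^ x^-1) A xG) conjsgKV eF.
Qed.

Lemma orbit_le_set2_cases A B o : A != B -> o \in orbits ->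
  orbit_le o (orbit [set A; B]) ->
  [\/ o = orbit [set A; B], o = orbit [set A] | o = orbit [set B]].
Proof.
move=> nAB /orbitsP [d dch ->] /orbit_leP [x xG sub].
case: (chain_shape dch) => [[E _ ed]|[E [F [_ _ EF ed]]]].
  move: sub; rewrite ed chain_conj_set1 sub1set => /set2P [eA|eB].
    by constructor 2; rewrite -eA chain_orbit_set1J.
  by constructor 3; rewrite -eB chain_orbit_set1J.
constructor 1; rewrite -(chain_orbitJ _ xG); congr (orbit _); apply/eqP.
by rewrite eqEcard sub card_chain_conj ed !cards2 nAB proper_neq.
Qed.

Lemma orbit_le_cases x y : x \in orbits -> y \in orbits -> orbit_le x y -> x != y ->
  exists A B, [/\ A \in Ap G p, B \in Ap G p, A \proper B, y = orbit [set A; B] &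
                x = orbit [set A] \/ x = orbit [set B]].
Proof.
move=> xD /orbitsP [d dch ->] le_xy nxy.
case: (chain_shape dch) => [[E _ ed]|[A [B [AAp BAp AB ed]]]].
  case/orbitsP: xD le_xy nxy => c /[!inE] /and3P [_ c0 _] -> /orbit_leP [g gG].
  rewrite ed subset1 -cards_eq0 card_chain_conj cards_eq0 (negbTE c0) orbF => /eqP ec.
  by rewrite -ec chain_orbitJ ?eqxx.
rewrite ed in le_xy nxy *; exists A, B; split=> //.
case: (orbit_le_set2_cases (proper_neq AB) xD le_xy) => e; [|by left|by right].
by rewrite e eqxx in nxy.
Qed.

Section Levels.
Variables (level : {set gT} -> nat) (R0 : {set gT}).
(* [level] is a breadth-first layering, rooted at the class of [R0], of the
   graph of conjugacy classes of A_p(G) joined by proper inclusions; the last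
   hypothesis makes this graph a tree. *)
Hypothesis R0Ap : R0 \in Ap G p.
Hypothesis levelJ : forall A x, x \in G -> level (A :^ x) = level A.
Hypothesis level0 : forall A, A \in Ap G p -> level A = 0 ->
  exists2 x, x \in G & A = R0 :^ x.
Hypothesis level_proper : forall A B, A \in Ap G p -> B \in Ap G p -> A \proper B ->
  level A = (level B).+1 \/ level B = (level A).+1.
Hypothesis level_down : forall A, A \in Ap G p -> 0 < level A ->
  exists B, [/\ B \in Ap G p, (A \proper B) || (B \proper A) & level B = (level A).-1].
Hypothesis level_down_unique : forall A B1 B2,
  A \in Ap G p -> B1 \in Ap G p -> B2 \in Ap G p -> 0 < level A ->
  (A \proper B1) || (B1 \proper A) -> (A \proper B2) || (B2 \proper A) ->
  level B1 = (level A).-1 -> level B2 = (level A).-1 ->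
  exists2 x, x \in G & A :^ x = A /\ B1 :^ x = B2.

(* Twice the mean level: [2k] on a vertex of level [k], [2k+1] on an edge
   between levels [k] and [k+1]. *)
Definition chain_depth c := (\sum_(A in c) level A).*2 %/ #|c|.

Definition orbit_depth (o : {set {set {set gT}}}) :=
  if [pick c in o] is Some c then chain_depth c else 0.

Lemma chain_depthJ c x : x \in G -> chain_depth (chain_conj c x) = chain_depth c.
Proof.
move=> xG; rewrite /chain_depth card_chain_conj big_imset /=; last first.
  by move=> A B _ _; apply: conjsg_inj.
by congr (_.*2 %/ _); apply: eq_bigr => A _; apply: levelJ.
Qed.

Lemma orbit_depth_orbit c : orbit_depth (orbit c) = chain_depth c.
Proof.
rewrite /orbit_depth; case: pickP => [d /mem_chain_orbit [x xG ->]|/(_ c)].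
  exact: chain_depthJ.
by rewrite chain_orbit_id.
Qed.

Lemma depth_orbit_set1 A : orbit_depth (orbit [set A]) = (level A).*2.
Proof. by rewrite orbit_depth_orbit /chain_depth big_set1 cards1 divn1. Qed.

Lemma depth_orbit_set2 A B :
  A != B -> orbit_depth (orbit [set A; B]) = level A + level B.
Proof.
move=> nAB; rewrite orbit_depth_orbit /chain_depth cards2 nAB big_setU1 ?big_set1 ?inE //=.
by rewrite -mul2n mulKn.
Qed.

Lemma edge_levels A B : A \in Ap G p -> B \in Ap G p -> A \proper B ->
  exists C E, [/\ C \in Ap G p, E \in Ap G p, (C \proper E) || (E \proper C),
                  level E = (level C).+1 & [set A; B] = [set C; E]].
Proof.
move=> AAp BAp AB; case: (level_proper AAp BAp AB) => lvAB.
  by exists B, A; rewrite AB orbT setUC.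
by exists A, B; rewrite AB.
Qed.

Lemma depth_orbit_edge C E :
  level E = (level C).+1 -> orbit_depth (orbit [set C; E]) = (level C).*2.+1.
Proof.
move=> lvE; have nCE : C != E by apply/eqP => eCE; move: lvE; rewrite eCE; apply: n_Sn.
by rewrite depth_orbit_set2 // lvE addnS addnn.
Qed.

Local Notation is_orbit_parent := (is_parent (@orbit_le gT) orbit_depth).

Lemma orbits_levelsP o : o \in orbits ->
  (exists2 A, A \in Ap G p & o = orbit [set A]) \/
  exists C E, [/\ C \in Ap G p, E \in Ap G p, (C \proper E) || (E \proper C),
                  level E = (level C).+1 & o = orbit [set C; E]].
Proof.
case/orbitsP => c /chain_shape [[A AAp ->]|[A [B [AAp BAp AB ->]]]] ->.
  by left; exists A.
have [C [E [CAp EAp CE lvE ->]]] := edge_levels AAp BAp AB.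
by right; exists C, E.
Qed.

Lemma orbit_depth0 o : o \in orbits -> orbit_depth o = 0 -> o = orbit [set R0].
Proof.
case/orbits_levelsP => [[A AAp ->]|[C [E [_ _ _ lvE ->]]]]; last by rewrite depth_orbit_edge.
rewrite depth_orbit_set1 => /eqP; rewrite double_eq0 => /eqP /(level0 AAp) [x xG ->].
exact: chain_orbit_set1J.
Qed.

Lemma orbit_parent_exists o : o \in orbits -> 0 < orbit_depth o ->
  exists2 y, y \in orbits & is_orbit_parent o y.
Proof.
case/orbits_levelsP => [[A AAp ->]|[C [E [CAp EAp CE lvE ->]]]]; last first.
  exists (orbit [set C]); first exact/imset_f/set1_chain.
  apply: is_parent_odd (depth_orbit_edge lvE) (depth_orbit_set1 C) _.
  exact/orbit_le_sub/subsetUl.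
rewrite depth_orbit_set1 double_gt0 => lvA.
have [B [BAp AB lvB]] := level_down AAp lvA.
have nAB : A != B by case/orP: AB => /proper_neq; rewrite // eq_sym.
exists (orbit [set A; B]); first exact/imset_f/set2_chain.
apply: (is_parent_even (k := level B)); last exact/orbit_le_sub/subsetUl.
  by rewrite depth_orbit_set1 lvB prednK.
by rewrite depth_orbit_set2 // lvB -addnn -addSn prednK.
Qed.

Lemma vertex_parent A y : y \in orbits -> 0 < level A ->
  is_orbit_parent (orbit [set A]) y ->
  exists B, [/\ B \in Ap G p, (A \proper B) || (B \proper A),
                level B = (level A).-1 & y = orbit [set A; B]].
Proof.
move=> yD lvA; rewrite /is_parent depth_orbit_set1 odd_double => /andP [/eqP dy le_xy].
case: (orbit_set1_le_cases yD le_xy) => [ey|[B [BAp AB ey]]].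
  by move: dy; rewrite ey depth_orbit_set1; lia.
have nAB : A != B by case/orP: AB => /proper_neq; rewrite // eq_sym.
exists B; split=> //; move: dy; rewrite ey depth_orbit_set2 //; lia.
Qed.

Lemma edge_parent C E y : y \in orbits -> level E = (level C).+1 ->
  is_orbit_parent (orbit [set C; E]) y -> y = orbit [set C].
Proof.
move=> yD lvE; rewrite /is_parent depth_orbit_edge // /= odd_double /= => /andP [/eqP dy le_yx].
have nCE : C != E by apply/eqP => eCE; move: lvE; rewrite eCE; apply: n_Sn.
case: (orbit_le_set2_cases nCE yD le_yx) => ey //; move: dy; rewrite ey.
  by rewrite depth_orbit_edge //; lia.
by rewrite depth_orbit_set1 lvE; lia.
Qed.

Lemma orbit_parent_unique x y z : x \in orbits -> y \in orbits -> z \in orbits ->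
  0 < orbit_depth x -> is_orbit_parent x y -> is_orbit_parent x z -> y = z.
Proof.
move=> + yD zD; case/orbits_levelsP => [[A AAp ->]|[C [E [_ _ _ lvE ->]]]]; last first.
  by move=> _ /(edge_parent yD lvE) -> /(edge_parent zD lvE) ->.
rewrite depth_orbit_set1 double_gt0 => lvA.
move=> /(vertex_parent yD lvA) [B1 [B1Ap AB1 lvB1 ->]].
move=> /(vertex_parent zD lvA) [B2 [B2Ap AB2 lvB2 ->]].
have [g gG [eA eB]] := level_down_unique AAp B1Ap B2Ap lvA AB1 AB2 lvB1 lvB2.
by rewrite -[in RHS]eA -eB chain_orbit_set2J.
Qed.

Lemma orbit_le_parent x y : x \in orbits -> y \in orbits -> orbit_le x y -> x != y ->
  is_orbit_parent x y \/ is_orbit_parent y x.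
Proof.
move=> xD yD le_xy nxy.
have [A [B [AAp BAp AB ey ex]]] := orbit_le_cases xD yD le_xy nxy.
have [C [E [_ _ _ lvE eAB]]] := edge_levels AAp BAp AB.
have {}ex : x = orbit [set C] \/ x = orbit [set E].
  have [/set2P eA /set2P eB] : A \in [set C; E] /\ B \in [set C; E].
    by rewrite -eAB set21 set22.
  by case: ex => ->; [case: eA | case: eB] => ->; auto.
rewrite eAB in ey; subst y; case: ex => ex; subst x.
  right; apply: (is_parent_odd (k := level C)) le_xy.
    exact: depth_orbit_edge.
  exact: depth_orbit_set1.
left; apply: (is_parent_even (k := level C)) le_xy.
  by rewrite depth_orbit_set1 lvE.
exact: depth_orbit_edge.
Qed.

Lemma levelled_orbits_contractible : fs_contractible orbits (@orbit_le gT).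
Proof.
apply: (rooted_tree_contractible (r := orbit [set R0]) (depth := orbit_depth)).
- exact/imset_f/set1_chain.
- exact: orbit_le_refl.
- exact: orbit_depth0.
- exact: orbit_parent_exists.
- exact: orbit_parent_unique.
- exact: orbit_le_parent.
Qed.

End Levels.

End HeightOneOrbits.

Section HeightOneAp.
Variables (gT : finGroupType) (G : {group gT}) (p : nat).
Local Open Scope group_scope.
Implicit Types (A B C W X : {set gT}) (H K P Q R S T : {group gT}).

Local Notation Ap_min := (Ap_min G p).
Local Notation Ap_nonmin := (Ap_nonmin G p).
Local Notation Sylow_root := (Sylow_root G p).

Hypotheses (p_pr : prime p) (p_dvd_G : p %| #|G|).

Lemma Ap_min_proper_join A S : Ap_min A -> ~~ Sylow_root A -> p.-Sylow(G) S -> A \subset S ->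
  A \proper A <*> 'Ohm_1('Z(S)) /\ A <*> 'Ohm_1('Z(S)) \in Ap G p.
Proof.
move=> minA nrootA sylS AS; have ZAp := Ohm1_center_Ap p_pr p_dvd_G sylS.
have [H eA] := Ap_group (Ap_min_Ap minA); subst A.
have JAp := Ap_join (Ap_min_Ap minA) ZAp (Ohm1_center_cent AS); split=> //.
rewrite properEneq joing_subl andbT; apply: contra nrootA => /eqP eJ.
apply/existsP; exists S; rewrite sylS /= eq_sym; apply/eqP.
by case/Ap_minP: minA => _; apply=> //; rewrite eJ joing_subr.
Qed.

Lemma Ap_min_nonroot_over A : Ap_min A -> ~~ Sylow_root A ->
  exists B, Ap_nonmin B /\ A \proper B.
Proof.
move=> minA nrootA; have [H eA] := Ap_group (Ap_min_Ap minA); subst A.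
have := Ap_min_Ap minA; rewrite ApE => /and3P [HG aH _].
have [S sylS HS] := Sylow_superset HG (abelem_pgroup aH).
have [AJ JAp] := Ap_min_proper_join minA nrootA sylS HS.
by exists (H <*> 'Ohm_1('Z(S))); split=> //; apply: (Ap_nonmin_proper (Ap_min_Ap minA) JAp AJ).
Qed.

Hypothesis no_proper_chain3 : forall A B C,
  A \in Ap G p -> B \in Ap G p -> C \in Ap G p -> A \proper B -> B \proper C -> False.

Lemma Ap_nonmin_max B C : Ap_nonmin B -> C \in Ap G p -> B \subset C -> C = B.
Proof.
move=> nminB CAp BC; have [A AAp AB] := Ap_nonminP nminB.
apply/eqP; rewrite eq_sym; apply/negPn/negP => nBC.
by apply: (no_proper_chain3 AAp (Ap_nonmin_Ap nminB) CAp AB); rewrite properEneq nBC.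
Qed.

Lemma Ap_proper_min A B : A \in Ap G p -> B \in Ap G p -> A \proper B -> Ap_min A.
Proof.
move=> AAp BAp AB; apply/negPn/negP => nminA.
have nminA' : Ap_nonmin A by rewrite /Ap_nonmin AAp.
by have eBA := Ap_nonmin_max nminA' BAp (proper_sub AB); rewrite eBA properxx in AB.
Qed.

Lemma Ap_nonmin_adjacent A B : Ap_nonmin A -> B \in Ap G p ->
  (A \proper B) || (B \proper A) -> B \proper A.
Proof.
move=> nminA BAp /orP [AB|//].
by have := Ap_proper_min (Ap_nonmin_Ap nminA) BAp AB; case/andP: nminA => _ /negbTE ->.
Qed.

Lemma Ap_nonmin_cent_sub B X : Ap_nonmin B -> X \in Ap G p -> X \subset 'C(B) -> X \subset B.
Proof.
move=> nminB XAp cBX; have [HB eB] := Ap_group (Ap_nonmin_Ap nminB).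
have [HX eX] := Ap_group XAp; subst B X.
have <- := Ap_nonmin_max nminB (Ap_join (Ap_nonmin_Ap nminB) XAp cBX) (joing_subl _ _).
exact: joing_subr.
Qed.

Lemma Ap_nonmin_cent_eq B F : Ap_nonmin B -> Ap_nonmin F -> B \subset 'C(F) -> B = F.
Proof.
move=> nminB nminF cFB; rewrite centsC in cFB.
exact: Ap_nonmin_max nminF (Ap_nonmin_Ap nminB) (Ap_nonmin_cent_sub nminB (Ap_nonmin_Ap nminF) cFB).
Qed.

Lemma Ap_nonmin_norm_sub B Q : Ap_nonmin B -> B \subset Q -> Q \subset 'C(B) ->
  'N_G(Q) \subset 'N(B).
Proof.
move=> nminB BQ cBQ; apply/subsetP => g /setIP [gG nQg]; rewrite inE.
apply: (Ap_nonmin_cent_sub nminB); first by rewrite ApJ //; apply: Ap_nonmin_Ap.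
by apply: subset_trans cBQ; rewrite -(normP nQg) conjSg.
Qed.

Lemma Ap_nonmin_sub_Sylow_norm B R : Ap_nonmin B -> p.-Sylow('N_G(B)) R -> B \subset R.
Proof.
move=> nminB sylR; have [H eB] := Ap_group (Ap_nonmin_Ap nminB); subst B.
have := Ap_nonmin_Ap nminB; rewrite ApE => /and3P [HG aH _].
apply: normal_sub_max_pgroup (abelem_pgroup aH) (normalSG HG).
by rewrite max_pgroup_Sylow.
Qed.

Lemma Ap_min_edge_unique A B1 B2 : Ap_min A -> ~~ Sylow_root A ->
  Ap_nonmin B1 -> Ap_nonmin B2 -> A \subset B1 -> A \subset B2 ->
  exists2 c, c \in G & A :^ c = A /\ B1 :^ c = B2.
Proof.
(* B1 and a C_G(A)-conjugate of B2 lie in one Sylow subgroup T of C_G(A), where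
   both are forced to equal A Omega_1(Z(S)) for a Sylow subgroup S of G over T. *)
move=> minA nrootA nminB1 nminB2 AB1 AB2.
have [H1 eH1] := Ap_group (Ap_nonmin_Ap nminB1).
have [H2 eH2] := Ap_group (Ap_nonmin_Ap nminB2); subst B1 B2.
have centA B : Ap_nonmin B -> A \subset B -> B \subset 'C_G(A) /\ p.-group B.
  case/andP; rewrite inE => /and4P [_ BG aB _] _ AB.
  by rewrite subsetI BG sub_abelian_cent ?(abelem_abelian aB) ?(abelem_pgroup aB).
have [cAB1 pB1] := centA H1 nminB1 AB1; have [cAB2 pB2] := centA H2 nminB2 AB2.
have [T sylT B1T] := Sylow_superset cAB1 pB1.
have [T2 sylT2 B2T2] := Sylow_superset cAB2 pB2.
have [c /setIP [cG cAc] eT2] := Sylow_trans sylT sylT2.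
have /subsetIP [TG cAT] := pHall_sub sylT.
have [S sylS TS] := Sylow_superset TG (pHall_pgroup sylT).
have AS : A \subset S by rewrite (subset_trans AB1) // (subset_trans B1T).
have [AJ JAp] := Ap_min_proper_join minA nrootA sylS AS.
have nminJ := Ap_nonmin_proper (Ap_min_Ap minA) JAp AJ.
have ZT : 'Ohm_1('Z(S)) \subset T.
  have ZS : 'Ohm_1('Z(S)) \subset S := subset_trans (Ohm_sub 1 _) (center_sub S).
  have <- : S :&: 'C_G(A) = T :> {set gT}.
    apply: (sub_pHall sylT); first exact: pgroupS (subsetIl _ _) (pHall_pgroup sylS).
      by rewrite subsetI TS subsetI TG.
    exact: subsetIr.
  by rewrite subsetI ZS subsetI (subset_trans ZS (pHall_sub sylS)) Ohm1_center_cent.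
have cJT : T \subset 'C(A <*> 'Ohm_1('Z(S))).
  rewrite centY subsetI cAT (subset_trans TS) // centsC.
  exact: Ohm1_center_cent.
have eB1 := Ap_nonmin_cent_eq nminB1 nminJ (subset_trans B1T cJT).
have eB2 : H2 :^ c^-1 = A <*> 'Ohm_1('Z(S)).
  apply: Ap_nonmin_cent_eq nminJ _; first by rewrite Ap_nonminJ ?groupV.
  by rewrite (subset_trans _ cJT) // sub_conjgV -eT2.
exists c => //; split; first exact/normP/(subsetP (cent_sub A)).
by rewrite eB1 -eB2 conjsgKV.
Qed.

Lemma Ap_nonmin_join_min B W X : Ap_nonmin B -> Ap_min W -> Ap_min X -> W != X ->
  W \subset B -> X \subset B -> B = W <*> X.
Proof.
move=> nminB minW minX nWX WB XB.
have [HW eW] := Ap_group (Ap_min_Ap minW); have [HX eX] := Ap_group (Ap_min_Ap minX).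
have [HB eB] := Ap_group (Ap_nonmin_Ap nminB); subst W X B.
have := Ap_nonmin_Ap nminB; rewrite inE => /and4P [_ _ aB _].
have cWX := sub_abelian_cent2 (abelem_abelian aB) XB WB.
have JAp := Ap_join (Ap_min_Ap minW) (Ap_min_Ap minX) cWX.
have WJ : gval HW \proper HW <*> HX.
  rewrite properEneq joing_subl andbT; apply: contra nWX => /eqP eWJ.
  by apply/eqP/esym; case/Ap_minP: minW => _; apply; rewrite ?(Ap_min_Ap minX) // eWJ joing_subr.
apply: Ap_nonmin_max (Ap_nonmin_proper (Ap_min_Ap minW) JAp WJ) (Ap_nonmin_Ap nminB) _.
by rewrite join_subG WB XB.
Qed.

Section MinimalCenter.
Variable S0 : {group gT}.
Hypotheses (sylS0 : p.-Sylow(G) S0) (minZ0 : Ap_min 'Ohm_1('Z(S0))).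

Lemma Ohm1_center_min S : p.-Sylow(G) S -> Ap_min 'Ohm_1('Z(S)).
Proof.
by move=> sylS; have [x xG ->] := Sylow_trans sylS0 sylS; rewrite Ohm1_centerJ Ap_minJ.
Qed.

Lemma Sylow_root_min A : Sylow_root A -> Ap_min A.
Proof. by case/existsP => S /andP [sylS /eqP ->]; apply: Ohm1_center_min. Qed.

Lemma Sylow_cent_nonmin B T :
  Ap_nonmin B -> p.-Sylow(G) T -> B \subset T -> T \subset 'C(B) -> False.
Proof.
move=> nminB sylT BT cBT; have BAp := Ap_nonmin_Ap nminB.
have BZ : B \subset 'Z(T) by rewrite subsetI BT centsC.
case/Ap_minP: (Ohm1_center_min sylT) => _ /(_ B BAp (sub_Ohm1_center BAp BZ)) eB.
by move: nminB; rewrite eB /Ap_nonmin Ohm1_center_min // andbF.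
Qed.

Lemma Ap_nonmin_root_sub B : Ap_nonmin B -> exists W, Sylow_root W /\ W \proper B.
Proof.
move=> nminB; have [H eB] := Ap_group (Ap_nonmin_Ap nminB); subst B.
have := Ap_nonmin_Ap nminB; rewrite ApE => /and3P [HG aH _].
have [S sylS HS] := Sylow_superset HG (abelem_pgroup aH).
exists 'Ohm_1('Z(S)); split; first by apply/existsP; exists S; rewrite sylS /=.
have ZH := Ap_nonmin_cent_sub nminB (Ohm1_center_Ap p_pr p_dvd_G sylS) (Ohm1_center_cent HS).
rewrite properEneq ZH andbT; apply: contraTneq nminB => <-.
by rewrite /Ap_nonmin Ohm1_center_min ?andbF.
Qed.

Lemma root_eq_Sylow_norm B R S1 S2 : Ap_nonmin B -> p.-Sylow('N_G(B)) R ->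
  p.-Sylow(G) S1 -> p.-Sylow(G) S2 -> R \subset S1 -> R \subset S2 ->
  'Ohm_1('Z(S1)) \subset B -> 'Ohm_1('Z(S2)) \subset B -> 'Ohm_1('Z(S1)) = 'Ohm_1('Z(S2)).
Proof.
(* Otherwise B is generated by the two roots, so R centralises B and is
   self-normalising in S1; then S1 = R centralises B. *)
move=> nminB sylR sylS1 sylS2 RS1 RS2 Z1B Z2B; apply/eqP/negPn/negP => nZ.
have eB := Ap_nonmin_join_min nminB (Ohm1_center_min sylS1) (Ohm1_center_min sylS2) nZ Z1B Z2B.
have BR := Ap_nonmin_sub_Sylow_norm nminB sylR.
have cBR : R \subset 'C(B).
  rewrite eB centY subsetI.
  rewrite (subset_trans RS1 (Sylow_cent_Ohm1_center S1)).
  exact: subset_trans RS2 (Sylow_cent_Ohm1_center S2).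
have S1G := pHall_sub sylS1.
have eS1 : S1 :=: R.
  apply: Sylow_norm_sub_eq sylR (pHall_pgroup sylS1) RS1 _.
  rewrite subsetI (subset_trans (subsetIl _ _) S1G).
  exact: subset_trans (setSI _ S1G) (Ap_nonmin_norm_sub nminB BR cBR).
by apply: Sylow_cent_nonmin nminB sylS1 _ _; rewrite eS1.
Qed.

Lemma root_Sylow_norm B S : Ap_nonmin B -> p.-Sylow(G) S -> 'Ohm_1('Z(S)) \subset B ->
  exists R S', [/\ p.-Sylow('N_G(B)) R, p.-Sylow(G) S', R \subset S' &
                   'Ohm_1('Z(S')) = 'Ohm_1('Z(S))].
Proof.
(* Conjugate S inside C_G(W) onto a Sylow subgroup T containing a Sylow subgroup
   Q of C_G(B).  If the root X of a Sylow subgroup over N_T(Q) differed from W,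
   N_T(Q) would centralise B = W X, forcing T = Q to centralise B. *)
move=> nminB sylS ZB; have [H eB] := Ap_group (Ap_nonmin_Ap nminB); subst B.
have := Ap_nonmin_Ap nminB; rewrite ApE => /and3P [HG aH _].
have [Q sylQ HQ] : {Q : {group gT} | p.-Sylow('C_G(H)) Q & H \subset Q}.
  by apply: Sylow_superset (abelem_pgroup aH); rewrite subsetI HG; apply: abelem_abelian aH.
have /subsetIP [QG cHQ] := pHall_sub sylQ.
set W := 'Ohm_1('Z(S)).
have [T sylT QT] : {T : {group gT} | p.-Sylow('C_G(W)) T & Q \subset T}.
  apply: Sylow_superset (pHall_pgroup sylQ).
  by rewrite subsetI QG (subset_trans cHQ (centS ZB)).
have /subsetIP [TG cWT] := pHall_sub sylT.
have sylS_CW : p.-Sylow('C_G(W)) S.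
  apply: (pHall_subl _ (subsetIl _ _) sylS).
  by rewrite subsetI (pHall_sub sylS) Sylow_cent_Ohm1_center.
have [c /setIP [cG cWc] eT] := Sylow_trans sylS_CW sylT.
have sylTG : p.-Sylow(G) T by rewrite eT pHallJ.
have ZT : 'Ohm_1('Z(T)) = W by rewrite eT Ohm1_centerJ; apply/normP/(subsetP (cent_sub W)).
have NQ_NH : 'N_T(Q) \subset 'N_G(H).
  rewrite subsetI (subset_trans (subsetIl _ _) TG).
  exact: subset_trans (setSI _ TG) (Ap_nonmin_norm_sub nminB HQ cHQ).
have [R sylR NR] := Sylow_superset NQ_NH (pgroupS (subsetIl _ _) (pHall_pgroup sylT)).
have RG : R \subset G by have /subsetIP [] := pHall_sub sylR.
have [S' sylS' RS'] := Sylow_superset RG (pHall_pgroup sylR).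
exists R, S'; split=> //; apply/eqP/negPn/negP => nXW.
have HS' := subset_trans (Ap_nonmin_sub_Sylow_norm nminB sylR) RS'.
have XH := Ap_nonmin_cent_sub nminB (Ohm1_center_Ap p_pr p_dvd_G sylS') (Ohm1_center_cent HS').
have nWX : W != 'Ohm_1('Z(S')) by rewrite eq_sym.
have eH := Ap_nonmin_join_min nminB (Ohm1_center_min sylS) (Ohm1_center_min sylS') nWX ZB XH.
have NQ_CH : 'N_T(Q) \subset 'C_G(H).
  rewrite subsetI (subset_trans (subsetIl _ _) TG) eH centY subsetI.
  rewrite (subset_trans (subsetIl _ _) cWT).
  exact: subset_trans NR (subset_trans RS' (Sylow_cent_Ohm1_center S')).
have eTQ := Sylow_norm_sub_eq sylQ (pHall_pgroup sylT) QT NQ_CH.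
by apply: Sylow_cent_nonmin nminB sylTG _ _; rewrite eTQ.
Qed.

Lemma root_edge_unique B W1 W2 : Ap_nonmin B -> Sylow_root W1 -> Sylow_root W2 ->
  W1 \subset B -> W2 \subset B -> exists2 n, n \in G & B :^ n = B /\ W1 :^ n = W2.
Proof.
(* Each root is the root of a Sylow subgroup containing a Sylow subgroup of
   N_G(B); these are N_G(B)-conjugate. *)
move=> nminB /existsP [S1 /andP [sylS1 /eqP ->]] /existsP [S2 /andP [sylS2 /eqP ->]].
move=> Z1B Z2B.
have [R1 [S1' [sylR1 sylS1' RS1 eZ1]]] := root_Sylow_norm nminB sylS1 Z1B.
have [R2 [S2' [sylR2 sylS2' RS2 eZ2]]] := root_Sylow_norm nminB sylS2 Z2B.
rewrite -eZ1 -eZ2 in Z1B Z2B *.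
have [n /setIP [nG nBn] eR] := Sylow_trans sylR1 sylR2.
have eBn : B :^ n = B by apply/normP.
exists n => //; split=> //; rewrite -Ohm1_centerJ.
apply: (root_eq_Sylow_norm (S1 := (S1' :^ n)%G) nminB sylR2 _ sylS2' _ RS2 _ Z2B).
- by rewrite pHallJ.
- by rewrite eR conjSg.
- by rewrite /= Ohm1_centerJ -eBn conjSg.
Qed.

Definition center_level A := if Sylow_root A then 0 else if Ap_min A then 2 else 1%nat.

Lemma center_levelP A : A \in Ap G p ->
  [\/ Sylow_root A /\ center_level A = 0,
      Ap_nonmin A /\ center_level A = 1%nat |
      [/\ Ap_min A, ~~ Sylow_root A & center_level A = 2]].
Proof.
rewrite /center_level => AAp; case: ifP => [rootA|nrootA]; first by constructor 1.
case: ifP => minA; first by constructor 3.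
by constructor 2; rewrite /Ap_nonmin AAp minA.
Qed.

Lemma center_level_nonmin B : Ap_nonmin B -> center_level B = 1%nat.
Proof.
move=> nminB; case: (center_levelP (Ap_nonmin_Ap nminB))
  => [[/Sylow_root_min minB _]|[]//|[minB _ _]];
  by move: nminB; rewrite /Ap_nonmin minB andbF.
Qed.

Lemma minimal_center_contractible : fs_contractible (Ap_orbits G p) (@orbit_le gT).
Proof.
apply: (levelled_orbits_contractible (level := center_level) no_proper_chain3
  (Ohm1_center_Ap p_pr p_dvd_G sylS0)).
- by move=> A x xG; rewrite /center_level Sylow_rootJ ?Ap_minJ.
- move=> A /center_levelP [[rootA _]|[_ ->]|[_ _ ->]] // _.
  exact: Sylow_root_conj sylS0 rootA.
- move=> A B AAp BAp AB; rewrite (center_level_nonmin (Ap_nonmin_proper AAp BAp AB)).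
  case: (center_levelP AAp) => [[_ ->]|[nminA _]|[_ _ ->]]; [by right | | by left].
  by move: nminA; rewrite /Ap_nonmin (Ap_proper_min AAp BAp AB) andbF.
- move=> A /center_levelP [[_ ->]|[nminA ->]|[minA nrootA ->]] // _.
    have [W [rootW WA]] := Ap_nonmin_root_sub nminA.
    exists W; rewrite (Sylow_root_Ap p_pr p_dvd_G rootW) WA orbT; split=> //.
    by rewrite /center_level rootW.
  have [B [nminB AB]] := Ap_min_nonroot_over minA nrootA.
  by exists B; rewrite (Ap_nonmin_Ap nminB) AB center_level_nonmin.
move=> A B1 B2 AAp B1Ap B2Ap; case: (center_levelP AAp) => [[_ ->]|[nminA ->]|[minA nrootA ->]] //.
  move=> _ /(Ap_nonmin_adjacent nminA B1Ap) B1A /(Ap_nonmin_adjacent nminA B2Ap) B2A lvB1 lvB2.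
  have rootB B : B \in Ap G p -> center_level B = 0 -> Sylow_root B.
    by move=> /center_levelP [[]|[_ ->]|[_ _ ->]].
  apply: root_edge_unique nminA (rootB _ B1Ap lvB1) (rootB _ B2Ap lvB2) _ _; exact: proper_sub.
move=> _ /(Ap_min_adjacent minA B1Ap) AB1 /(Ap_min_adjacent minA B2Ap) AB2 _ _.
apply: Ap_min_edge_unique minA nrootA _ _ (proper_sub AB1) (proper_sub AB2).
  exact: Ap_nonmin_proper AAp B1Ap AB1.
exact: Ap_nonmin_proper AAp B2Ap AB2.
Qed.

End MinimalCenter.

Section NonminimalCenter.
Variable S0 : {group gT}.
Hypotheses (sylS0 : p.-Sylow(G) S0) (nminZ0 : Ap_nonmin 'Ohm_1('Z(S0))).

Lemma Ap_nonmin_conj B : Ap_nonmin B -> exists2 x, x \in G & B = 'Ohm_1('Z(S0)) :^ x.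
Proof.
move=> nminB; have [H eB] := Ap_group (Ap_nonmin_Ap nminB); subst B.
have := Ap_nonmin_Ap nminB; rewrite ApE => /and3P [HG aH _].
have [S sylS HS] := Sylow_superset HG (abelem_pgroup aH).
have [x xG eS] := Sylow_trans sylS0 sylS.
exists x; rewrite // -Ohm1_centerJ -eS.
apply: Ap_nonmin_cent_eq nminB _ _; first by rewrite eS Ohm1_centerJ Ap_nonminJ.
by rewrite centsC Ohm1_center_cent.
Qed.

Lemma Ap_min_nonroot A : Ap_min A -> ~~ Sylow_root A.
Proof.
move=> minA; apply/negP => /(Sylow_root_conj sylS0) [x xG eA].
by move: (Ap_min_nonmin minA); rewrite eA Ap_nonminJ // nminZ0.
Qed.

Lemma nonminimal_center_contractible : fs_contractible (Ap_orbits G p) (@orbit_le gT).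
Proof.
apply: (levelled_orbits_contractible (level := fun A => Ap_min A : nat) no_proper_chain3
  (Ap_nonmin_Ap nminZ0)) => /=.
- by move=> A x xG; rewrite Ap_minJ.
- move=> A AAp; case: (boolP (Ap_min A)) => // nminA _.
  by apply: Ap_nonmin_conj; rewrite /Ap_nonmin AAp nminA.
- move=> A B AAp BAp AB; rewrite (Ap_proper_min AAp BAp AB); left.
  by case/andP: (Ap_nonmin_proper AAp BAp AB) => _ /negbTE ->.
- move=> A AAp; case: (boolP (Ap_min A)) => // minA _.
  have [B [nminB AB]] := Ap_min_nonroot_over minA (Ap_min_nonroot minA).
  by exists B; case/andP: nminB => -> /negbTE ->; rewrite AB.
move=> A B1 B2 AAp B1Ap B2Ap; case: (boolP (Ap_min A)) => // minA _.
move=> /(Ap_min_adjacent minA B1Ap) AB1 /(Ap_min_adjacent minA B2Ap) AB2 _ _.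
apply: Ap_min_edge_unique minA (Ap_min_nonroot minA) _ _ (proper_sub AB1) (proper_sub AB2).
  exact: Ap_nonmin_proper AAp B1Ap AB1.
exact: Ap_nonmin_proper AAp B2Ap AB2.
Qed.

End NonminimalCenter.

End HeightOneAp.

Theorem corollary5p10 (gT : finGroupType) (G : {group gT}) (p : nat) :
  prime p -> p %| #|G| ->
  poset_height (Ap_orbits G p) (@orbit_le gT) 1 ->
  fs_contractible (Ap_orbits G p) (@orbit_le gT).
Proof.
move=> p_pr p_dvd_G /height1_no_proper_chain3 no_chain3.
have [S0 sylS0] := Sylow_exists p G.
have Z0Ap := Ohm1_center_Ap p_pr p_dvd_G sylS0.
case: (boolP (Ap_min G p 'Ohm_1('Z(S0))%g)) => [minZ0|nminZ0].
  exact: (minimal_center_contractible p_pr p_dvd_G no_chain3 sylS0 minZ0).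
apply: (nonminimal_center_contractible p_pr p_dvd_G no_chain3 sylS0).
by rewrite /Ap_nonmin Z0Ap.
Qed.
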